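(* Let $(\Xi,\Xi^\infty)$ and $(\Lambda,\Lambda^\infty)$ be countable approximate groups, and let $f:\Xi^\infty\to\Lambda^\infty$ be a function with $f(\Xi)\subseteq\Lambda$ which is a quasimorphism (its defect set $D(f)=\{f(y)^{-1}f(x)^{-1}f(xy)\mid x,y\in\Xi^\infty\}$ is finite) and is symmetric ($f(x^{-1})=f(x)^{-1}$ for all $x\in\Xi^\infty$). Let $d$ and $d'$ be left-invariant proper metrics on $\Xi^\infty$ and $\Lambda^\infty$ respectively. Then the restriction $f|_\Xi:(\Xi,d|_{\Xi\times\Xi})\to(\Lambda,d'|_{\Lambda\times\Lambda})$ is coarsely Lipschitz, i.e. for every $t>0$ there is $s>0$ such that $d(\xi,\eta)\leq t$ with $\xi,\eta\in\Xi$ implies $d'(f(\xi),f(\eta))\leq s$.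
   Context: A subset $\Lambda$ of a group $G$ is an approximate subgroup if $\Lambda=\Lambda^{-1}$, $e\in\Lambda$, and there is a finite $F\subset G$ with $\Lambda^2\subseteq\Lambda F$. Its enveloping group is $\Lambda^\infty=\bigcup_{k\in\mathbb N}\Lambda^k$; $(\Lambda,\Lambda^\infty)$ is called an approximate group, countable if $\Lambda$ is countable. Countable groups are regarded as discrete; a metric is proper if closed balls are compact. *)

From Stdlib Require Import Reals List.
Open Scope R_scope.

Record Group := {
  carrier :> Type;
  gmul : carrier -> carrier -> carrier;
  ginv : carrier -> carrier;
  gone : carrier;
  gmulA : forall x y z, gmul x (gmul y z) = gmul (gmul x y) z;
  gmul1l : forall x, gmul gone x = x;
  gmul1r : forall x, gmul x gone = x;
  gmulVl : forall x, gmul (ginv x) x = gone;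
  gmulVr : forall x, gmul x (ginv x) = gone
}.

Arguments gmul {g}.
Arguments ginv {g}.
Arguments gone {g}.

Definition finite_set {G : Group} (S : G -> Prop) : Prop :=
  exists l : list G, forall x, S x -> In x l.

Definition countable_set {G : Group} (S : G -> Prop) : Prop :=
  exists c : G -> nat, forall x y, S x -> S y -> c x = c y -> x = y.

Definition approx_subgroup {G : Group} (L : G -> Prop) : Prop :=
  (forall x, L x <-> L (ginv x)) /\ L gone /\
  exists F : list G, forall a b, L a -> L b ->
    exists l f, L l /\ In f F /\ gmul a b = gmul l f.

Fixpoint pow_set {G : Group} (L : G -> Prop) (k : nat) : G -> Prop :=
  match k with
  | O => fun x => x = gone
  | S k' => fun x => exists a b, L a /\ pow_set L k' b /\ x = gmul a b
  end.

Definition envelope {G : Group} (L : G -> Prop) : G -> Prop :=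
  fun x => exists k, pow_set L k x.

Definition countable_approx_group {G : Group} (L : G -> Prop) : Prop :=
  approx_subgroup L /\ countable_set L.

Definition defect_set {G H : Group} (X : G -> Prop) (f : G -> H) : H -> Prop :=
  fun z => exists x y, envelope X x /\ envelope X y /\
    z = gmul (ginv (f y)) (gmul (ginv (f x)) (f (gmul x y))).

Definition quasimorphism {G H : Group} (X : G -> Prop) (f : G -> H) : Prop :=
  finite_set (defect_set X f).

Definition symmetric_map {G H : Group} (X : G -> Prop) (f : G -> H) : Prop :=
  forall x, envelope X x -> f (ginv x) = ginv (f x).

Definition is_metric_on {G : Group} (S : G -> Prop) (d : G -> G -> R) : Prop :=
  forall x y z, S x -> S y -> S z ->
    0 <= d x y /\ (d x y = 0 <-> x = y) /\ d x y = d y x /\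
    d x z <= d x y + d y z.

Definition left_invariant_on {G : Group} (S : G -> Prop) (d : G -> G -> R) : Prop :=
  forall g x y, S g -> S x -> S y -> d (gmul g x) (gmul g y) = d x y.

(* Proper: closed balls compact; S countable, hence discrete, so compact = finite. *)
Definition proper_on {G : Group} (S : G -> Prop) (d : G -> G -> R) : Prop :=
  forall x r, S x -> finite_set (fun y => S y /\ d x y <= r).

(* Proof idea: by left invariance, d(xi, eta) = d(e, y) with y := xi^-1 eta,
   and properness of d makes the ball of radius t about e a finite set.  The
   quasimorphism property writes f(eta) = f(xi y) = f(xi) f(y) z with z in the
   finite defect set, so by left invariance of d' the distance d'(f xi, f eta)
   equals d'(e, f(y) z), which takes only finitely many values. *)
From Stdlib Require Import Reals Lra List.
Open Scope R_scope.

Section GroupFacts.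

Variable G : Group.
Implicit Types x y : G.

Lemma ginvM x y : ginv (gmul x y) = gmul (ginv y) (ginv x).
Proof.
  assert (Hright : gmul (gmul x y) (gmul (ginv y) (ginv x)) = gone).
  { rewrite <- gmulA, (gmulA _ y), gmulVr, gmul1l, gmulVr. reflexivity. }
  transitivity (gmul (ginv (gmul x y)) (gmul (gmul x y) (gmul (ginv y) (ginv x)))).
  - rewrite Hright, gmul1r. reflexivity.
  - rewrite gmulA, gmulVl, gmul1l. reflexivity.
Qed.

Lemma ginv1 : ginv (@gone G) = gone.
Proof. rewrite <- (gmul1r _ (ginv gone)). apply gmulVl. Qed.

Lemma gmulKV x y : gmul x (gmul (ginv x) y) = y.
Proof. rewrite gmulA, gmulVr, gmul1l. reflexivity. Qed.

End GroupFacts.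

Section Envelope.

Variables (G : Group) (L : G -> Prop).

Lemma pow_setD k m x y :
  pow_set L k x -> pow_set L m y -> pow_set L (k + m) (gmul x y).
Proof.
  revert x. induction k as [|k IH]; simpl; intros x Hx Hy.
  - subst x. rewrite gmul1l. exact Hy.
  - destruct Hx as [a [b [Ha [Hb ->]]]].
    exists a, (gmul b y). repeat split; auto.
    rewrite gmulA. reflexivity.
Qed.

Lemma envelopeM x y : envelope L x -> envelope L y -> envelope L (gmul x y).
Proof. intros [k Hk] [m Hm]. exists (k + m)%nat. apply pow_setD; assumption. Qed.

Lemma envelope1 : envelope L gone.
Proof. exists 0%nat. reflexivity. Qed.

Lemma envelope_sub x : L x -> envelope L x.
Proof. intros Hx. exists 1%nat. exists x, gone. rewrite gmul1r. repeat split; exact Hx. Qed.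

Lemma envelopeV x :
  (forall a, L a -> L (ginv a)) -> envelope L x -> envelope L (ginv x).
Proof.
  intros L_sym [k Hk]. revert x Hk. induction k as [|k IH]; simpl; intros x Hx.
  - subst x. rewrite ginv1. apply envelope1.
  - destruct Hx as [a [b [Ha [Hb ->]]]]. rewrite ginvM.
    apply envelopeM; [apply IH; assumption | apply envelope_sub, L_sym, Ha].
Qed.

End Envelope.

Lemma left_invariant_dist_mul (G : Group) (S : G -> Prop) (d : G -> G -> R) x y :
  left_invariant_on S d -> S gone -> S x -> S y -> d x (gmul x y) = d gone y.
Proof.
  intros Hinv S1 Sx Sy. rewrite <- (gmul1r _ x) at 1. apply Hinv; assumption.
Qed.

Lemma list_upper_bound (A : Type) (l : list A) (h : A -> R) :
  exists M, 0 < M /\ forall a, In a l -> h a <= M.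
Proof.
  induction l as [|b l [M [M_pos HM]]].
  - exists 1. split; [lra | intros a []].
  - exists (Rmax M (h b)). split.
    + eapply Rlt_le_trans; [exact M_pos | apply Rmax_l].
    + intros a [<- | Ha]; [apply Rmax_r |].
      eapply Rle_trans; [apply HM, Ha | apply Rmax_l].
Qed.

Section Quasimorphism.

Variables (G H : Group) (X : G -> Prop) (L : H -> Prop) (f : G -> H).

Definition defect x y : H := gmul (ginv (f y)) (gmul (ginv (f x)) (f (gmul x y))).

Lemma defect_spec x y : f (gmul x y) = gmul (f x) (gmul (f y) (defect x y)).
Proof. unfold defect. rewrite !gmulKV. reflexivity. Qed.

Hypothesis L_sym : forall a, L a -> L (ginv a).
Hypothesis f_envelope : forall x, envelope X x -> envelope L (f x).

Lemma envelope_defect x y :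
  envelope X x -> envelope X y -> envelope L (defect x y).
Proof.
  intros Ex Ey. unfold defect.
  apply envelopeM; [apply envelopeV; auto |].
  apply envelopeM; [apply envelopeV; auto |].
  apply f_envelope, envelopeM; assumption.
Qed.

Variable d' : H -> H -> R.
Hypothesis d'_inv : left_invariant_on (envelope L) d'.

Lemma dist_quasimorphism_mul x y : envelope X x -> envelope X y ->
  d' (f x) (f (gmul x y)) = d' gone (gmul (f y) (defect x y)).
Proof.
  intros Ex Ey. rewrite defect_spec.
  apply (left_invariant_dist_mul _ (envelope L)); auto using envelope1.
  apply envelopeM; auto using envelope_defect.
Qed.

Lemma quasimorphism_bounded_increments (l : list G) :
  quasimorphism X f ->
  exists M, 0 < M /\ forall x y, envelope X x -> envelope X y -> In y l ->
    d' (f x) (f (gmul x y)) <= M.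
Proof.
  intros [D HD].
  destruct (list_upper_bound _ (list_prod l D)
              (fun p => d' gone (gmul (f (fst p)) (snd p)))) as [M [M_pos HM]].
  exists M. split; [exact M_pos |]. intros x y Ex Ey Hy.
  rewrite dist_quasimorphism_mul by assumption.
  apply (HM (y, defect x y)), in_prod; [exact Hy |].
  apply HD. exists x, y. auto.
Qed.

End Quasimorphism.

Theorem lemma5p1 (G H : Group) (Xi : G -> Prop) (Lam : H -> Prop) (f : G -> H)
  (d : G -> G -> R) (d' : H -> H -> R) :
  countable_approx_group Xi ->
  countable_approx_group Lam ->
  (forall x, envelope Xi x -> envelope Lam (f x)) ->
  (forall x, Xi x -> Lam (f x)) ->
  quasimorphism Xi f ->
  symmetric_map Xi f ->
  is_metric_on (envelope Xi) d -> left_invariant_on (envelope Xi) d ->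
  proper_on (envelope Xi) d ->
  is_metric_on (envelope Lam) d' -> left_invariant_on (envelope Lam) d' ->
  proper_on (envelope Lam) d' ->
  forall t, 0 < t -> exists s, 0 < s /\
    forall xi eta, Xi xi -> Xi eta -> d xi eta <= t -> d' (f xi) (f eta) <= s.
Proof.
  intros [[Xi_sym _] _] [[Lam_sym _] _] f_envelope _ f_quasi _ _ d_inv d_proper
    _ d'_inv _ t _.
  destruct (d_proper gone t (envelope1 _ _)) as [ball Hball].
  destruct (quasimorphism_bounded_increments _ _ Xi Lam f
              (fun a => proj1 (Lam_sym a)) f_envelope d' d'_inv ball f_quasi)
    as [M [M_pos HM]].
  exists M. split; [exact M_pos |]. intros xi eta Hxi Heta Hdist.
  assert (Exi : envelope Xi xi) by (apply envelope_sub; exact Hxi).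
  assert (Ey : envelope Xi (gmul (ginv xi) eta)).
  { apply envelopeM; [apply envelopeV; [intro a; apply Xi_sym | exact Exi] |].
    apply envelope_sub; exact Heta. }
  rewrite <- (gmulKV _ xi eta) in Hdist |- *.
  apply HM; [exact Exi | exact Ey |].
  apply Hball. split; [exact Ey |].
  rewrite <- (left_invariant_dist_mul _ (envelope Xi) d xi); auto using envelope1.
Qed.
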